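(* Let $g\ge1$, $n=g+1$, $k\in\{1,\dots,g\}$, $\kappa_1,\dots,\kappa_n\in\mathbb C$ pairwise distinct, $\beta_1,\dots,\beta_g\in\mathbb C^*$, $\beta_0:=1$, $I_k=\{1,\dots,k\}$, and let $A$ be the $k\times n$ matrix with $A_{ij}=\delta_{ij}$ for $j\le k$ and $A_{ij}=\frac{\beta_{i-1}}{\beta_{j-1}(\kappa_j-\kappa_i)^2}\prod_{l\in I_k,l\ne i}\frac{\kappa_i-\kappa_l}{\kappa_j-\kappa_l}$ for $i\le k<j$. Then the matroid of $A$ (whose bases are the $k$-subsets $J\subset[n]$ with nonzero maximal minor $A_J$) is $\mathcal M_{\bar{\mathbf a},v_1}$.
   Context: $B\in\mathbb Z^{g\times n}$ has $B_{i,1}=1$, $B_{i,i+1}=-1$, other entries $0$; $Q=BB^T$. $\bar{\mathbf a}\in\mathbb R^g$ has its first $k-1$ entries equal to $\tfrac{g+1-k}{g+1}$ and the remaining $g+1-k$ entries equal to $-\tfrac{k}{g+1}$ (a vertex of the Voronoi polytope of $Q$). $\mathcal D_{\bar{\mathbf a},Q}=\{\mathbf c\in\mathbb Z^g:\bar{\mathbf a}^TQ\bar{\mathbf a}=(\bar{\mathbf a}-\mathbf c)^TQ(\bar{\mathbf a}-\mathbf c)\}$. $\mathbf s_{\bar{\mathbf a}}\in\{0,1\}^n$ has $j$-th entry $0$ if $(B^T\bar{\mathbf a})_j>0$ and $1$ if $(B^T\bar{\mathbf a})_j<0$. The matroid $\mathcal M_{\bar{\mathbf a},v_1}$ on $[n]$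 has bases $\{I\subset[n],|I|=k:\exists\mathbf c\in\mathcal D_{\bar{\mathbf a},Q}\text{ with }(B^T\mathbf c+\mathbf s_{\bar{\mathbf a}})_i=1\ \forall i\in I\}$. *)

From HB Require Import structures.
From Stdlib Require Rdefinitions.
From mathcomp Require Import Rstruct.
From mathcomp.real_closed Require Import complex.
From mathcomp Require Import all_boot all_order all_algebra.
Set Implicit Arguments. Unset Strict Implicit. Unset Printing Implicit Defensive.
Import Order.TTheory GRing.Theory Num.Theory.
Local Open Scope ring_scope.

Notation CC := (complex Rdefinitions.R).

(** Indices are 0-based: 'I_n = {0,...,n-1} stands for [n] = {1,...,n}
    (index j stands for j+1). Throughout n = g.+1. *)

Definition Bmx (g : nat) : 'M[int]_(g, g.+1) :=
  \matrix_(i < g, j < g.+1)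
    (if (j == 0 :> nat) then 1 else if (j == i.+1 :> nat) then -1 else 0).

Definition Bq (g : nat) : 'M[rat]_(g, g.+1) := map_mx (fun z : int => z%:~R) (Bmx g).

Definition Qmx (g : nat) : 'M[rat]_g := Bq g *m (Bq g)^T.

Definition qform (g : nat) (x : 'cV[rat]_g) : rat := (x^T *m Qmx g *m x) 0 0.

Definition abar (g k : nat) : 'cV[rat]_g :=
  \col_(i < g)
    (if (val i < k.-1)%N then ((g.+1 - k)%:R / g.+1%:R) else - (k%:R / g.+1%:R)).

Definition inD (g k : nat) (c : 'cV[int]_g) : Prop :=
  qform (abar g k) = qform (abar g k - map_mx (fun z : int => z%:~R) c).

Definition sabar (g k : nat) : 'cV[int]_(g.+1) :=
  \col_(j < g.+1)
    (if (((Bq g)^T *m abar g k) j 0 < 0) then 1 else 0).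

Definition M_basis (g k : nat) (I : {set 'I_g.+1}) : Prop :=
  #|I| = k /\
  exists c : 'cV[int]_g, inD k c /\
    forall i, i \in I -> ((Bmx g)^T *m c + sabar g k) i 0 = 1.

(** The matrix A (0-based: row i, column j; beta 0 = 1 plays beta_0). *)
Definition Amx (g k : nat) (kappa beta : 'I_g.+1 -> CC) : 'M[CC]_(k, g.+1) :=
  \matrix_(i < k, j < g.+1)
    (if (val j < k)%N then ((i == j :> nat)%:R)
     else
       let ki := kappa (inord i) in
       beta (inord i) / (beta j * (kappa j - ki) ^+ 2) *
       \prod_(l < k | l != i) ((ki - kappa (inord l)) / (kappa j - kappa (inord l)))).

(** maximal minor A_J of a k x n matrix: columns of J in increasing order. *)
Definition minor (k n : nat) (A : 'M[CC]_(k, n.+1)) (J : {set 'I_n.+1}) : 'M[CC]_k :=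
  colsub (fun i : 'I_k => nth ord0 (enum J) i) A.

Definition mx_basis (k n : nat) (A : 'M[CC]_(k, n.+1)) (J : {set 'I_n.+1}) : Prop :=
  #|J| = k /\ \det (minor A J) != 0.

From mathcomp Require Import Rstruct.
From mathcomp.real_closed Require Import complex.
From mathcomp Require Import all_boot all_order all_algebra.
From mathcomp Require Import ring.
Set Implicit Arguments. Unset Strict Implicit. Unset Printing Implicit Defensive.
Import Order.TTheory GRing.Theory Num.Theory.
Local Open Scope ring_scope.

(* Both matroids are the uniform matroid U(k, g+1).  On the lattice side, B^T abar = t - 1_K with
   t = k/(g+1) and K the first k indices, and for any k-set J the integer vector
   c = 1_K - 1_J (on coordinates 2..n) gives B^T (abar - c) = t - 1_J, which has the same
   quadratic form and turns s_abar into 1_J.  On the matrix side A = [I | C] with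
   C_ij = r_i s_j / (kappa_j - kappa_i), so a linear relation among the columns in J
   restricts, on the rows outside J, to a vanishing sum of partial fractions with as many
   poles as evaluation points; a polynomial degree count kills it. *)

Lemma sum_mem_set (V : nmodType) (T : finType) (S : {set T}) (h : bool -> V) :
  \sum_j h (j \in S) = h true *+ #|S| + h false *+ (#|T| - #|S|).
Proof.
rewrite (bigID (mem S)) /= (eq_bigr (fun=> h true)) => [|j ->] //.
rewrite [X in _ + X](eq_bigr (fun=> h false)) => [|j]; last by move=> /negbTE ->.
rewrite !sumr_const -(cardC S) addKn.
by congr (_ + _ *+ _); apply: eq_card.
Qed.

Lemma widen_ord_inj m n (le_mn : (m <= n)%N) : injective (widen_ord le_mn).
Proof. by move=> i j [] /val_inj. Qed.

Lemma card_ord_ltn n k : (k <= n)%N -> #|[set j : 'I_n | (j < k)%N]| = k.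
Proof.
move=> kn; rewrite -[RHS](card_ord k) -(card_imset _ (@widen_ord_inj _ _ kn)).
apply: eq_card => j; rewrite !inE; apply/idP/imsetP => [jk|[i _ ->]] //=.
by exists (Ordinal jk) => //; apply: val_inj.
Qed.

Definition Bshaped (R : pzRingType) (g : nat) (M : 'M[R]_(g, g.+1)) : Prop :=
  forall i j, M i j = if (val j == 0)%N then 1 else if (val j == i.+1)%N then -1 else 0.

Lemma Bmx_shaped g : Bshaped (Bmx g).
Proof. by move=> i j; rewrite mxE. Qed.

Lemma Bq_shaped g : Bshaped (Bq g).
Proof. by move=> i j; rewrite !mxE; case: ifP => _ //; case: ifP. Qed.

(* [M^T x = (sum_i x_i, -x_1, ..., -x_g)], the unique zero-sum vector with tail [-x]. *)
Lemma Bshaped_trmx_mul (R : pzRingType) g (M : 'M[R]_(g, g.+1)) (x : 'cV[R]_g)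
    (f : 'I_g.+1 -> R) :
  Bshaped M -> (forall i, f (lift ord0 i) = - x i 0) -> \sum_j f j = 0 ->
  forall j, (M^T *m x) j 0 = f j.
Proof.
move=> hM fx f_sum0 j; rewrite mxE.
case: (unliftP ord0 j) => [i ->|->].
  rewrite (bigD1 i) //= big1 ?addr0 => [|l li]; rewrite !mxE hM /=.
    by rewrite eqxx mulN1r fx.
  by rewrite /bump leq0n add1n eqSS (inj_eq val_inj) eq_sym (negbTE li) mul0r.
rewrite (eq_bigr (fun l => x l 0)) => [|l _]; last by rewrite !mxE hM mul1r.
move/eqP: f_sum0; rewrite big_ord_recl addr_eq0 => /eqP ->.
by rewrite -sumrN; apply: eq_bigr => i _; rewrite fx opprK.
Qed.

Lemma qform_sum_sqr g (x : 'cV[rat]_g) : qform x = \sum_j ((Bq g)^T *m x) j 0 ^+ 2.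
Proof.
rewrite /qform; have -> : x^T *m Qmx g *m x = ((Bq g)^T *m x)^T *m ((Bq g)^T *m x).
  by rewrite trmx_mul trmxK /Qmx !mulmxA.
by rewrite mxE; apply: eq_bigr => j _; rewrite mxE expr2.
Qed.

Section Abar.

Variables g k : nat.
Hypotheses (k_gt0 : (0 < k)%N) (k_le_g : (k <= g)%N).

Let t : rat := k%:R / g.+1%:R.
Let K := [set j : 'I_g.+1 | (j < k)%N].

Let t_gt0 : 0 < t. Proof. by rewrite divr_gt0 // ltr0n. Qed.
Let t_lt1 : t < 1. Proof. by rewrite ltr_pdivrMr ?ltr0n // mul1r ltr_nat ltnS. Qed.

Lemma sum_sub_mem (S : {set 'I_g.+1}) : #|S| = k -> \sum_j (t - (j \in S)%:R) = 0.
Proof.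
move=> cS; rewrite (sum_mem_set S (fun b => t - b%:R)) card_ord cS subr0.
rewrite mulrnBl addrAC -mulrnDr subnKC ?(leqW k_le_g) //.
by rewrite -[_ *+ g.+1]mulr_natr /t mulfVK ?pnatr_eq0 // subrr.
Qed.

Lemma qform_sub_mem (x : 'cV[rat]_g) (S : {set 'I_g.+1}) :
  #|S| = k -> (forall i, t - (lift ord0 i \in S)%:R = - x i 0) ->
  qform x = (t - 1) ^+ 2 *+ k + t ^+ 2 *+ (g.+1 - k).
Proof.
move=> cS xS; rewrite qform_sum_sqr.
rewrite (eq_bigr (fun j => (t - (j \in S)%:R) ^+ 2)) => [|j _]; last first.
  by rewrite (Bshaped_trmx_mul (@Bq_shaped g) xS (sum_sub_mem cS)).
by rewrite (sum_mem_set S (fun b => (t - b%:R) ^+ 2)) card_ord cS subr0.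
Qed.

Lemma abar_sub_mem i : t - (lift ord0 i \in K)%:R = - abar g k i 0.
Proof.
rewrite !mxE inE /= /bump leq0n add1n -ltn_predRL.
case: ifP => _ /=; last by rewrite opprK subr0.
by rewrite -opprB natrB ?(leqW k_le_g) // mulrBl divff ?pnatr_eq0.
Qed.

Lemma trmx_Bq_abar j : ((Bq g)^T *m abar g k) j 0 = t - (j \in K)%:R.
Proof.
apply: (Bshaped_trmx_mul (f := fun j => t - (j \in K)%:R) (@Bq_shaped g) abar_sub_mem).
by rewrite sum_sub_mem // card_ord_ltn // leqW.
Qed.

Lemma sabar_mem j : sabar g k j 0 = (j \in K)%:R.
Proof.
rewrite mxE trmx_Bq_abar; case: (j \in K) => /=.
  by rewrite subr_lt0 t_lt1.
by rewrite subr0 ltNge (ltW t_gt0).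
Qed.

(* [c = 1_K - 1_J] on the last [g] coordinates: both [abar] and [abar - c] have [B^T]-image
   [t - 1_S] for a [k]-set [S], hence the same quadratic form. *)
Lemma M_basis_card (J : {set 'I_g.+1}) : #|J| = k -> M_basis k J.
Proof.
move=> cJ; split=> //.
have cK : #|K| = k by rewrite card_ord_ltn // leqW.
pose c : 'cV[int]_g := \col_i ((lift ord0 i \in K)%:R - (lift ord0 i \in J)%:R).
exists c; split.
  rewrite /inD (qform_sub_mem cK abar_sub_mem) (qform_sub_mem cJ) // => i.
  rewrite mxE [map_mx _ _ _ _]mxE opprB addrC -abar_sub_mem !mxE rmorphB /= !rmorph_nat.
  ring.
move=> i iJ; rewrite mxE sabar_mem.
rewrite (Bshaped_trmx_mul (f := fun j => (j \in J)%:R - (j \in K)%:R) (@Bmx_shaped g)).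
- by rewrite iJ subrK.
- by move=> l; rewrite mxE opprB.
by rewrite sumrB (sum_mem_set J (fun b => b%:R)) (sum_mem_set K (fun b => b%:R)) cJ cK subrr.
Qed.

End Abar.

Section PartialFractions.

Variables (F : fieldType) (I : finType) (P : {set I}) (y u : I -> F).
Hypothesis y_inj : {in P &, injective y}.

Let Q := \sum_(p in P) u p *: \prod_(q in P | q != p) ('X - (y q)%:P).

Let hornerQ z : Q.[z] = \sum_(p in P) u p * \prod_(q in P | q != p) (z - y q).
Proof.
rewrite horner_sum; apply: eq_bigr => p _.
by rewrite hornerZ horner_prod; under eq_bigr do rewrite hornerXsubC.
Qed.

Let size_Q : (size Q <= #|P|)%N.
Proof.
apply: (leq_trans (size_sum _ _ _)); apply/bigmax_leqP => p Pp.
apply: (leq_trans (size_scale_leq _ _)); apply: (leq_trans (size_poly_prod_leq _ _)).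
under eq_bigr do rewrite size_XsubC.
rewrite sum_nat_const (cardD1 p P) Pp (eq_card (B := [predD1 P & p])) => [|q]; last first.
  by rewrite !inE andbC.
by rewrite -[2%R]/2%N muln2 -addnn -addSn addnK.
Qed.

Let hornerQ_y p : p \in P -> Q.[y p] = u p * \prod_(q in P | q != p) (y p - y q).
Proof.
move=> Pp; rewrite hornerQ (bigD1 p Pp) /= [X in _ + X]big1 ?addr0 // => q /andP [Pq qp].
by rewrite (bigD1 p) /= ?subrr ?mul0r ?mulr0 // Pp eq_sym.
Qed.

Let hornerQ_out x : {in P, forall p, x != y p} ->
  Q.[x] = - \prod_(q in P) (x - y q) * \sum_(p in P) u p / (y p - x).
Proof.
move=> xy; rewrite hornerQ mulr_sumr; apply: eq_bigr => p Pp.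
rewrite (bigD1 p Pp) /=.
have : y p - x != 0 by rewrite subr_eq0 eq_sym xy.
by move=> ?; field.
Qed.

(* The sums are [- Q(x) / prod (x - y_q)] for the polynomial [Q] of degree [< #|P|]
   with [Q(y_p) = u_p prod_(q != p) (y_p - y_q)]; vanishing at [#|P|] points kills [Q]. *)
Lemma partial_fractions_eq0 (xs : seq F) :
  uniq xs -> (#|P| <= size xs)%N -> {in xs, forall x, {in P, forall p, x != y p}} ->
  {in xs, forall x, \sum_(p in P) u p / (y p - x) = 0} ->
  {in P, forall p, u p = 0}.
Proof.
move=> xs_uniq xs_size xs_y xs_sum.
have Q0 : Q = 0.
  apply: contraTeq (leqnn (size xs)) => Q_neq0; rewrite -ltnNge.
  apply: (leq_trans _ (leq_trans size_Q xs_size)); apply: max_poly_roots Q_neq0 _ xs_uniq.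
  by apply/allP => x xs_x; rewrite /root hornerQ_out ?xs_sum ?mulr0 // => p; apply: xs_y.
move=> p Pp; apply/eqP; have /eqP := hornerQ_y Pp.
rewrite Q0 horner0 eq_sym mulf_eq0 => /orP [//|]; rewrite prodf_seq_eq0.
case/hasP => q _ /andP [/andP [Pq qp]]; rewrite subr_eq0 => /eqP /y_inj yqp.
by rewrite yqp ?eqxx in qp.
Qed.

End PartialFractions.

Lemma det_minor_neq0 k n (A : 'M[CC]_(k, n.+1)) (J : {set 'I_n.+1}) : #|J| = k ->
  (forall w : 'I_n.+1 -> CC,
     (forall a, \sum_(j in J) w j * A a j = 0) -> {in J, forall j, w j = 0}) ->
  \det (minor A J) != 0.
Proof.
move=> cJ cols_free; rewrite -det_tr; apply/det0P => -[v /eqP v_neq0 vA].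
pose col (p : 'I_k) := nth ord0 (enum J) p.
have size_enum : size (enum J) = k by rewrite -cardE.
have col_inj : injective col.
  by move=> p q /eqP; rewrite nth_uniq ?size_enum ?enum_uniq // => /eqP /val_inj.
have J_col : J = col @: setT.
  apply/setP => j; apply/idP/imsetP => [Jj | [p _ ->]]; last first.
    by rewrite -mem_enum mem_nth ?size_enum.
  have jk : (index j (enum J) < k)%N by rewrite -size_enum index_mem mem_enum.
  by exists (Ordinal jk); rewrite // /col nth_index ?mem_enum.
pose w j := \sum_(p | col p == j) v 0 p.
have w_col p : w (col p) = v 0 p by rewrite /w (big_pred1 p) // => q; rewrite inj_eq.
apply: v_neq0; apply/rowP => p; rewrite mxE -w_col cols_free //; last first.
  by rewrite J_col imset_f.
move=> a; rewrite J_col big_imset => [|p1 p2 _ _ /col_inj] //=.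
transitivity ((v *m (minor A J)^T) 0 a); last by rewrite vA mxE.
by rewrite mxE; apply: eq_big => [q|q _]; rewrite ?inE // w_col !mxE.
Qed.

Section AmxColumns.

Variables (g k : nat) (kappa beta : 'I_g.+1 -> CC).
Hypotheses (k_le_g : (k <= g)%N) (kappa_inj : injective kappa)
  (beta_neq0 : forall j, beta j != 0).

Let A := Amx k kappa beta.
Let K := [set j : 'I_g.+1 | (j < k)%N].
Let id_col (a : 'I_k) : 'I_g.+1 := widen_ord (leqW k_le_g) a.

Let inord_id_col (a : 'I_k) : inord a = id_col a.
Proof. by apply: val_inj; rewrite /= inordK // (leq_trans (ltn_ord a)) ?leqW. Qed.

Let id_col_K (a : 'I_k) : id_col a \in K.
Proof. by rewrite inE /= ltn_ord. Qed.

Let K_id_col j : j \in K -> exists a, id_col a = j.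
Proof. by rewrite inE => jk; exists (Ordinal jk); apply: val_inj. Qed.

Let row_scale (a : 'I_k) : CC :=
  beta (id_col a) * \prod_(l < k | l != a) (kappa (id_col a) - kappa (id_col l)).
Let col_scale (j : 'I_g.+1) : CC := (beta j * \prod_(l < k) (kappa j - kappa (id_col l)))^-1.

Let kappa_sub_neq0 (a : 'I_k) j : j \notin K -> kappa j - kappa (id_col a) != 0.
Proof.
by move=> jK; rewrite subr_eq0 (inj_eq kappa_inj); apply: contraNneq jK => ->.
Qed.

Let row_scale_neq0 a : row_scale a != 0.
Proof.
rewrite mulf_neq0 // prodf_seq_neq0; apply/allP => l _; apply/implyP => la.
by rewrite subr_eq0 (inj_eq kappa_inj) (inj_eq (@widen_ord_inj _ _ _)) eq_sym.
Qed.

Let col_scale_neq0 j : j \notin K -> col_scale j != 0.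
Proof.
move=> jK; rewrite invr_eq0 mulf_neq0 //.
by rewrite prodf_seq_neq0; apply/allP => l _; apply: kappa_sub_neq0.
Qed.

Lemma Amx_unit a j : j \in K -> A a j = (id_col a == j)%:R.
Proof. by rewrite inE => jk; rewrite mxE jk. Qed.

Lemma Amx_cauchy a j :
  j \notin K -> A a j = row_scale a * col_scale j / (kappa j - kappa (id_col a)).
Proof.
move=> jK; have := jK; rewrite inE -leqNgt => kj.
rewrite mxE ltnNge kj /= prodf_div /row_scale /col_scale inord_id_col.
under eq_bigr do rewrite inord_id_col.
under [\prod_(l < k | l != a) (kappa j - _)]eq_bigr do rewrite inord_id_col.
rewrite [\prod_(l < k) _](bigD1 a) //=.
have := kappa_sub_neq0 a jK; have := beta_neq0 j.
have : \prod_(l < k | l != a) (kappa j - kappa (id_col l)) != 0.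
  by rewrite prodf_seq_neq0; apply/allP => l _; apply/implyP => _; apply: kappa_sub_neq0.
by move=> *; field; apply/and3P.
Qed.

(* Rows indexed by [K :\: J] only see the Cauchy columns [J :\: K], and there are equally
   many of them; the partial fraction lemma kills those coefficients, after which the
   identity columns [J :&: K] are read off directly. *)
Lemma Amx_free_cols (J : {set 'I_g.+1}) (w : 'I_g.+1 -> CC) : #|J| = k ->
  (forall a, \sum_(j in J) w j * A a j = 0) -> {in J, forall j, w j = 0}.
Proof.
move=> cJ wA.
have w_out : {in J :\: K, forall j, w j * col_scale j = 0}.
  apply: (@partial_fractions_eq0 _ _ _ kappa _ _ [seq kappa r | r <- enum (K :\: J)]).
  - by move=> i j _ _ /kappa_inj.
  - by rewrite map_inj_uniq ?enum_uniq.
  - by rewrite size_map -cardE !cardsD cJ card_ord_ltn ?leqW // setIC.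
  - move=> x /mapP [r]; rewrite mem_enum => /setDP [rK _] -> j /setDP [_ jK].
    by rewrite (inj_eq kappa_inj); apply: contraNneq jK => <-.
  move=> x /mapP [r]; rewrite mem_enum => /setDP [/K_id_col [a <-] rJ] ->.
  apply: (mulfI (row_scale_neq0 a)); rewrite mulr0 -[RHS](wA a) mulr_sumr [RHS](bigID (mem K)) /=.
  rewrite [X in _ = X + _]big1 ?add0r => [|j /andP [Jj jK]].
    apply: eq_big => [j|j /setDP [Jj jK]]; first by rewrite !inE andbC.
    by rewrite Amx_cauchy //; field; apply: kappa_sub_neq0.
  rewrite Amx_unit //; have -> : (id_col a == j) = false by apply: contraNF rJ => /eqP ->.
  by rewrite mulr0.
have {}w_out : {in J :\: K, forall j, w j = 0}.
  move=> j jJK; apply/eqP; have /eqP := w_out j jJK.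
  by rewrite mulf_eq0 (negbTE (col_scale_neq0 _)) ?orbF //; case/setDP: jJK.
move=> j Jj; case: (boolP (j \in K)) => [/K_id_col [a aj] | jK]; last by rewrite w_out // inE jK.
have := wA a; rewrite -aj in Jj *; rewrite (bigD1 (id_col a) Jj) /= Amx_unit // eqxx mulr1.
rewrite big1 ?addr0 // => i /andP [Ji ia].
case: (boolP (i \in K)) => iK; first by rewrite Amx_unit // eq_sym (negbTE ia) mulr0.
by rewrite w_out ?mul0r // inE iK.
Qed.

End AmxColumns.

Theorem corollary5p4 (g k : nat) (kappa beta : 'I_g.+1 -> CC) :
  (1 <= g)%N -> (1 <= k <= g)%N ->
  injective kappa ->
  beta ord0 = 1 ->
  (forall j, beta j != 0) ->
  forall J : {set 'I_g.+1}, mx_basis (Amx k kappa beta) J <-> M_basis k J.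
Proof.
move=> _ /andP [k_gt0 k_le_g] kappa_inj _ beta_neq0 J.
split=> [[cJ _] | [cJ _]]; first exact: M_basis_card.
split=> //; apply: (det_minor_neq0 cJ) => w.
exact: (Amx_free_cols k_le_g kappa_inj beta_neq0 cJ).
Qed.
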